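(* The map $\phi_{s'} : \mathbf{ASM} \to \mathbb{K}(q)$ linearly defined, for any $s' \in \{\operatorname{se}, \operatorname{nw}, \operatorname{sw}, \operatorname{ne}\}$ and any ASM $\delta$ of size $n$ by $\phi_{s'}(\mathbf{F}_{M^\delta}) := \frac{q^{s'(\delta)}}{[n]_q!}$ is an algebra morphism.
   Context: Let $\mathbb{K}$ be a field of characteristic zero; $[n]_q := 1 + q + \dots + q^{n-1}$ and $[n]_q! := [1]_q \cdots [n]_q$, $[0]_q! := 1$. An alternating sign matrix (ASM) of size $n$ is an $n\times n$ matrix with entries in $\{0,+,-\}$ (read as $0,1,-1$) such that every row and column starts and ends (ignoring zeros) with $+$ and in each row and column the $+$ and $-$ alternate. For an ASM $\delta$, $M^\delta$ is the $\{0,1\}$-matrix with $M^\delta_{ij}=1$ iff $\delta_{ij}\ne0$. $\mathbf{PM}_1$ is the Hopf algebra with basis $(\mathbf{F}_M)$ indexed by $\{0,1\}$-square matrices with no null row or column, with product $\mathbf{F}_{M_1}\cdot\mathbf{F}_{M_2} = \sum \mathbf{F}_M$ over all $M$ obtained by shuffling the columns of $M_1$ (with an $n_2\times n_1$ zero block placed below) with the columns of $M_2$ (with an $n_1\times n_2$ zero block placed above), $n_i$ the sizes. $\mathbf{ASM}$ is the Hopf subalgebra of $\mathbf{PM}_1$ spanned by the $\mathbf{F}_{M^\delta}$, graded by the size of $\delta$. Each ASM is in bijection with a six-vertex configuration on the $n\times n$ grid with domain wall boundary conditions (horizontal boundary edges point inward, vertical boundary edges point outward); zero entries correspond to the four vertex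 types $\operatorname{ne}$ (vertical edges pointing up, horizontal edges pointing right), $\operatorname{nw}$ (up, left), $\operatorname{se}$ (down, right), $\operatorname{sw}$ (down, left), while $+$ and $-$ entries are the two other vertex types. Equivalently, for a zero entry $\delta_{ij}$, with $r = \sum_{j'<j}\delta_{ij'}$ and $c = \sum_{i'<i}\delta_{i'j}$ (both in $\{0,1\}$), its type is $\operatorname{ne}$ if $(r,c)=(0,0)$, $\operatorname{nw}$ if $(r,c)=(1,0)$, $\operatorname{se}$ if $(r,c)=(0,1)$, $\operatorname{sw}$ if $(r,c)=(1,1)$. For $s'$ among these types, $s'(\delta)$ is the number of vertices of type $s'$ in the configuration of $\delta$. *)

From HB Require Import structures.
From mathcomp Require Import all_boot all_order all_algebra fraction.
From Stdlib Require Import ClassicalEpsilon.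
Set Implicit Arguments. Unset Strict Implicit. Unset Printing Implicit Defensive.
Import Order.TTheory GRing.Theory Num.Theory.
Local Open Scope ring_scope.

Definition alt_seq (s : seq int) : bool :=
  [&& all (fun x => (x == 1) || (x == -1)) s,
      head 0 s == 1, last 0 s == 1 &
      sorted (fun x y => y == - x) s].

Definition is_asm (n : nat) (d : 'M[int]_n) : bool :=
  [&& [forall i, forall j, (d i j == 0) || (d i j == 1) || (d i j == -1)],
      [forall i, alt_seq [seq d i j | j <- enum 'I_n & d i j != 0]] &
      [forall j, alt_seq [seq d i j | i <- enum 'I_n & d i j != 0]]].

(* M^delta : the {0,1}-matrix (as booleans) of nonzero entries *)
Definition supp (n : nat) (d : 'M[int]_n) : 'M[bool]_n :=
  \matrix_(i, j) (d i j != 0).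

Inductive vtype := ne | nw | se | sw.

Definition vtype_eqb (a b : vtype) : bool :=
  match a, b with
  | ne, ne | nw, nw | se, se | sw, sw => true
  | _, _ => false
  end.

Definition vtype_at (n : nat) (d : 'M[int]_n) (i j : 'I_n) : option vtype :=
  let r := \sum_(j' < n | (j' < j)%N) d i j' in
  let c := \sum_(i' < n | (i' < i)%N) d i' j in
  if (r == 0) && (c == 0) then Some ne
  else if (r == 1) && (c == 0) then Some nw
  else if (r == 0) && (c == 1) then Some se
  else if (r == 1) && (c == 1) then Some sw
  else None.

Definition count_type (s' : vtype) (n : nat) (d : 'M[int]_n) : nat :=
  #|[set ij : 'I_n * 'I_n | (d ij.1 ij.2 == 0) &&
      (match vtype_at d ij.1 ij.2 with
       | Some t => vtype_eqb t s' | None => false end)]|.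

Definition qvar (K : fieldType) : {fraction {poly K}} := FracField.tofrac ('X : {poly K}).

Definition qint (K : fieldType) (n : nat) : {fraction {poly K}} :=
  \sum_(i < n) qvar K ^+ i.

Definition qfact (K : fieldType) (n : nat) : {fraction {poly K}} :=
  \prod_(i < n) qint K i.+1.

Definition phiASM (K : fieldType) (s' : vtype) (n : nat) (d : 'M[int]_n)
  : {fraction {poly K}} :=
  qvar K ^+ count_type s' d / qfact K n.

(* phi_{s'} on a basis element F_M of ASM, M = M^delta: choose the ASM delta
   with M^delta = M (it is unique); value 0 if M is not an ASM support
   (such F_M are not in ASM, so this value is irrelevant). *)
Definition phiPM (K : fieldType) (s' : vtype) (n : nat) (M : 'M[bool]_n)
  : {fraction {poly K}} :=
  let d := epsilon (inhabits (0 : 'M[int]_n))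
                   (fun d => is_asm d && (supp d == M)) in
  if is_asm d && (supp d == M) then phiASM K s' d else 0.

(* The shuffle determined by the set S of positions (among n1+n2 columns)
   receiving the columns of M1 (in order); the remaining positions receive
   the columns of M2 (in order).  Rows < n1 belong to M1 (zero block below
   for M2's columns), rows >= n1 to M2. *)
Definition shuffle (n1 n2 : nat) (S : {set 'I_(n1 + n2)})
  (M1 : 'M[bool]_n1) (M2 : 'M[bool]_n2) : 'M[bool]_(n1 + n2) :=
  \matrix_(i, j)
    match split i with
    | inl i1 => (j \in S) &&
        match insub #|[set x in S | (x < j)%N]| with
        | Some k => M1 i1 k | None => false end
    | inr i2 => (j \notin S) &&
        match insub #|[set x in ~: S | (x < j)%N]| with
        | Some k => M2 i2 k | None => false end
    end.

(* The nonzero entries of every row of an ASM read 1, -1, ..., 1, so an ASM is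
   determined by its support and phi is well defined on supports.  A column
   shuffle of the supports of d1 and d2 along a set S of n1 columns is the
   support of the block ASM interleaving the columns of d1 (top rows) with
   those of d2 (bottom rows).  Its zero entries inside the diagonal blocks keep
   their types, while the prefix sums of the rows and the total 1 of each column
   of d1 make the zeros of the off-diagonal blocks contribute, depending on s',
   the number of inversions of the shuffle or of its complement.  Summing
   q ^ inversions over the n1-subsets S gives the q-binomial coefficient
   [n1 + n2]_q! / ([n1]_q! [n2]_q!), which is the product rule. *)

From HB Require Import structures.
From mathcomp Require Import all_boot all_order all_algebra fraction.
From Stdlib Require Import ClassicalEpsilon.
From mathcomp Require Import zify ring.
Set Implicit Arguments. Unset Strict Implicit. Unset Printing Implicit Defensive.
Import Order.TTheory GRing.Theory Num.Theory.
Local Open Scope ring_scope.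

(** * Alternating sequences and supports *)

Lemma nth_path_alt (x : int) s i : path (fun a b => b == - a) x s ->
  (i <= size s)%N -> nth 0 (x :: s) i = x * (-1) ^+ i.
Proof.
elim: s x i => [|y s IH] x [|i] //=; rewrite ?mulr1 // => /andP[/eqP -> ps] hi.
by rewrite (IH _ _ ps hi) exprS mulrA mulrN1.
Qed.

Lemma alt_seqE s : alt_seq s ->
  s = mkseq (fun i => (-1) ^+ i) (size s) /\ odd (size s).
Proof.
case: s => [|x s] /and4P[_ //= /eqP x1 last1 ps]; subst x.
have nthE i : (i <= size s)%N -> nth 0 (1 :: s) i = (-1) ^+ i.
  by move=> hi; rewrite (nth_path_alt ps hi) mul1r.
split.
  apply: (@eq_from_nth _ 0) => [|i hi]; first by rewrite size_mkseq.
  by rewrite nth_mkseq // nthE.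
move: last1; rewrite (last_nth 0) /= nthE // -signr_odd /=.
by case: (odd (size s)) => //; rewrite expr1 -subr_eq0 opprK.
Qed.

Lemma sum_sign (R : pzRingType) n : \sum_(0 <= i < n) (-1) ^+ i = (odd n)%:R :> R.
Proof.
elim: n => [|n IH]; first by rewrite big_geq.
rewrite big_nat_recr //= IH -signr_odd; case: (odd n) => /=.
  by rewrite expr1 subrr.
by rewrite expr0 add0r.
Qed.

Lemma alt_seq_take_sum s m : alt_seq s ->
  \sum_(z <- take m s) z = (odd (minn m (size s)))%:R.
Proof.
case/alt_seqE=> sE _; rewrite sE /mkseq -map_take take_iota big_map size_map size_iota.
by rewrite -sum_sign /index_iota subn0.
Qed.

Lemma alt_seq_uniq s t : alt_seq s -> alt_seq t -> size s = size t -> s = t.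
Proof. by move=> /alt_seqE[sE _] /alt_seqE[tE _] st; rewrite sE tE st. Qed.

Lemma alt_seq_sum s : alt_seq s -> \sum_(z <- s) z = 1.
Proof.
move=> als; have [_ odd_s] := alt_seqE als.
by rewrite -[s in LHS](take_size s) alt_seq_take_sum // minnn odd_s.
Qed.

Lemma asm_supp_inj n (d d' : 'M[int]_n) :
  is_asm d -> is_asm d' -> supp d = supp d' -> d = d'.
Proof.
move=> /and3P[_ /forallP alt_row _] /and3P[_ /forallP alt_row' _] eq_supp.
apply/matrixP => i j.
have nz_eq k : (d' i k != 0) = (d i k != 0).
  by have := congr1 (fun M : 'M[bool]_n => M i k) eq_supp; rewrite !mxE.
have := alt_row' i; rewrite (eq_filter nz_eq) => /alt_seq_uniq/(_ (alt_row i)).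
rewrite !size_map => /(_ erefl)/esym/eq_in_map row_eq.
have [dz|dnz] := eqVneq (d i j) 0; last by apply: row_eq; rewrite mem_filter dnz mem_enum.
by move: (nz_eq j); rewrite dz eqxx => /negbFE/eqP ->.
Qed.

Lemma phiPM_supp K s' n (d : 'M[int]_n) :
  is_asm d -> phiPM K s' (supp d) = phiASM K s' d.
Proof.
move=> asm_d; rewrite /phiPM.
have ex_d : exists d0, is_asm d0 && (supp d0 == supp d) by exists d; rewrite asm_d eqxx.
case/andP: (epsilon_spec (inhabits (0 : 'M[int]_n)) _ ex_d) => asm_e /eqP supp_e.
by rewrite asm_e supp_e eqxx (asm_supp_inj asm_e asm_d supp_e).
Qed.

(** * Matrices and sets indexed by [nat] *)

(* Zero outside the matrix, so that rows and columns of a shuffle can be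
   addressed by arithmetic on their indices. *)
Definition mx_nat n (d : 'M[int]_n) (i j : nat) : int :=
  match (insub i : option 'I_n), (insub j : option 'I_n) with
  | Some a, Some b => d a b | _, _ => 0 end.

Definition nzseq (f : nat -> int) (m : nat) : seq int :=
  [seq f k | k <- iota 0 m & f k != 0].

Lemma mx_natE n (d : 'M[int]_n) (a b : 'I_n) : mx_nat d a b = d a b.
Proof. by rewrite /mx_nat !valK. Qed.

Lemma enum_nzseqE n (f : 'I_n -> int) (g : nat -> int) : (forall k : 'I_n, g k = f k) ->
  [seq f k | k <- enum 'I_n & f k != 0] = nzseq g n.
Proof.
move=> gE; rewrite /nzseq -val_enum_ord filter_map -map_comp.
rewrite (eq_filter (a2 := fun k => f k != 0)) => [|k]; last by rewrite /= gE.
by apply: eq_map => k; rewrite /= gE.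
Qed.

Lemma sum_nzseq f m : \sum_(0 <= k < m) f k = \sum_(z <- nzseq f m) z.
Proof.
rewrite big_map big_filter [RHS]big_mkcond /index_iota subn0.
by apply: eq_bigr => k _; case: eqP => // ->.
Qed.

Lemma prefix_sum_alt f n m : alt_seq (nzseq f n) -> (m <= n)%N ->
  (\sum_(0 <= k < m) f k == 0) || (\sum_(0 <= k < m) f k == 1).
Proof.
move=> alt_f le_mn; rewrite sum_nzseq.
have -> : nzseq f m = take (size (nzseq f m)) (nzseq f n).
  by rewrite /nzseq -(subnKC le_mn) iotaD filter_cat map_cat take_size_cat.
by rewrite alt_seq_take_sum //; case: odd.
Qed.

Lemma sum_alt f n : alt_seq (nzseq f n) -> \sum_(0 <= k < n) f k = 1.
Proof. by rewrite sum_nzseq; apply: alt_seq_sum. Qed.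

Lemma eq_nzseq f g m : (forall k, (k < m)%N -> f k = g k) -> nzseq f m = nzseq g m.
Proof.
move=> fg; have fg_iota : {in iota 0 m, f =1 g} by move=> k; rewrite mem_iota => /andP[_ /fg].
rewrite /nzseq (eq_in_filter (a1 := fun k => f k != 0) (a2 := fun k => g k != 0));
  last by move=> k /fg_iota ->.
by apply/eq_in_map => k; rewrite mem_filter => /andP[_ /fg_iota].
Qed.

Section AsmNat.
Variables (n : nat) (d : 'M[int]_n).
Hypothesis asm_d : is_asm d.

Lemma asm_entry i j : (mx_nat d i j == 0) || (mx_nat d i j == 1) || (mx_nat d i j == -1).
Proof.
case/and3P: asm_d => /forallP entries _ _; rewrite /mx_nat.
case: insubP => [a _ _|_]; last by rewrite eqxx.
case: insubP => [b _ _|_]; last by rewrite eqxx.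
exact: (forallP (entries a)).
Qed.

Lemma asm_row_alt i : (i < n)%N -> alt_seq (nzseq (mx_nat d i) n).
Proof.
move=> lt_in; case/and3P: asm_d => _ /forallP/(_ (Ordinal lt_in)) + _.
by rewrite (@enum_nzseqE _ _ (mx_nat d i)) // => k; exact: (mx_natE d (Ordinal lt_in)).
Qed.

Lemma asm_col_alt j : (j < n)%N -> alt_seq (nzseq (mx_nat d ^~ j) n).
Proof.
move=> lt_jn; case/and3P: asm_d => _ _ /forallP/(_ (Ordinal lt_jn)).
by rewrite (@enum_nzseqE _ _ (mx_nat d ^~ j)) // => k; exact: (mx_natE d k (Ordinal lt_jn)).
Qed.

End AsmNat.

Lemma is_asm_nat n (d : 'M[int]_n) :
  (forall i j, (mx_nat d i j == 0) || (mx_nat d i j == 1) || (mx_nat d i j == -1)) ->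
  (forall i, (i < n)%N -> alt_seq (nzseq (mx_nat d i) n)) ->
  (forall j, (j < n)%N -> alt_seq (nzseq (mx_nat d ^~ j) n)) -> is_asm d.
Proof.
move=> entries rows cols; apply/and3P; split; apply/forallP => i.
- by apply/forallP => j; rewrite -mx_natE.
- by rewrite (@enum_nzseqE _ _ (mx_nat d i)) ?rows // => k; rewrite mx_natE.
- by rewrite (@enum_nzseqE _ _ (mx_nat d ^~ i)) ?cols // => k; rewrite mx_natE.
Qed.

Definition nbefore (w : pred nat) (j : nat) : nat := count w (iota 0 j).

Lemma nbeforeS (w : pred nat) j : nbefore w j.+1 = (nbefore w j + w j)%N.
Proof. by rewrite /nbefore -addn1 iotaD count_cat /= addn0. Qed.

Lemma nbefore_predC (w : pred nat) j : (nbefore w j + nbefore (predC w) j)%N = j.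
Proof. by rewrite /nbefore count_predC size_iota. Qed.

Lemma leq_nbefore (w : pred nat) : {homo nbefore w : a b / (a <= b)%N}.
Proof. by move=> a b le_ab; rewrite /nbefore -(subnKC le_ab) iotaD count_cat leq_addr. Qed.

Lemma ltn_nbefore (w : pred nat) j J : w j -> (j < J)%N -> (nbefore w j < nbefore w J)%N.
Proof. by move=> wj lt_jJ; apply: leq_trans (leq_nbefore w lt_jJ); rewrite nbeforeS wj addn1. Qed.

Lemma eq_nbefore (w w' : pred nat) J : (forall a, (a < J)%N -> w a = w' a) ->
  forall j, (j <= J)%N -> nbefore w j = nbefore w' j.
Proof.
move=> ww' j le_jJ; apply: eq_in_count => a; rewrite mem_iota => /andP[_ lt_aj].
exact/ww'/(leq_trans lt_aj).
Qed.

Lemma nbefore_ltn m j : nbefore (fun a => (a < m)%N) j = minn j m.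
Proof. by elim: j => [|j IH]; rewrite ?min0n // nbeforeS IH; case: ltnP; lia. Qed.

Lemma nbefore_geq m j : nbefore (fun a => (m <= a)%N) j = (j - m)%N.
Proof. by elim: j => [|j IH] //; rewrite nbeforeS IH; case: leqP; lia. Qed.

Lemma big_nbefore (R : Type) (idx : R) (op : Monoid.law idx) (w : pred nat) (g : nat -> R) J :
  \big[op/idx]_(0 <= j < J) (if w j then g (nbefore w j) else idx)
  = \big[op/idx]_(0 <= k < nbefore w J) g k.
Proof.
elim: J => [|J IH]; first by rewrite !big_geq.
rewrite big_nat_recr //= IH nbeforeS; case: (w J); last by rewrite Monoid.mulm1 addn0.
by rewrite addn1 big_nat_recr.
Qed.

Definition spread (w : pred nat) (f : nat -> int) (j : nat) : int :=
  if w j then f (nbefore w j) else 0.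

Lemma nzseq_spread w f J : nzseq (spread w f) J = nzseq f (nbefore w J).
Proof.
elim: J => [|J IH] //; rewrite nbeforeS {1}/nzseq -addn1 iotaD filter_cat map_cat.
rewrite -/(nzseq (spread w f) J) IH /= /spread; case wJ: (w J) => /=.
  rewrite addn1 [in RHS]/nzseq -addn1 iotaD filter_cat map_cat add0n /=.
  by case: ifP => //= _; rewrite wJ.
by rewrite cats0 addn0.
Qed.

Definition natmem N (S : {set 'I_N}) : pred nat :=
  fun j => if (insub j : option 'I_N) is Some x then x \in S else false.

Lemma natmemE N (S : {set 'I_N}) (x : 'I_N) : natmem S x = (x \in S).
Proof. by rewrite /natmem valK. Qed.

Lemma natmemC N (S : {set 'I_N}) j : (j < N)%N -> natmem (~: S) j = ~~ natmem S j.
Proof. by move=> lt_jN; rewrite /natmem insubT /= inE. Qed.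

Lemma natmemS N (S : {set 'I_N}) j (lt_jN : (j < N)%N) : natmem S j = (Ordinal lt_jN \in S).
Proof. by rewrite /natmem insubT. Qed.

Lemma card_nbefore N (A : {set 'I_N}) j : (j <= N)%N ->
  #|[set x in A | (x < j)%N]| = nbefore (natmem A) j.
Proof.
move=> le_jN; rewrite /nbefore -sum1_count -sum1_card big_mkcond /= [RHS]big_mkcond.
rewrite -[j in iota 0 j]subn0.
transitivity (\sum_(x < N) (if natmem A x && (x < j)%N then 1 else 0))%N.
  by apply: eq_bigr => x _; rewrite !inE natmemE.
rewrite -(big_mkord xpredT (fun a => if natmem A a && (a < j)%N then 1 else 0)%N).
rewrite (big_cat_nat (leq0n j) le_jN) /= [X in (_ + X)%N]big1_seq ?addn0.
  by apply: eq_big_nat => a /andP[_ ->]; rewrite andbT.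
move=> a /andP[_]; rewrite mem_index_iota => /andP[+ _].
by rewrite leqNgt => /negbTE ->; rewrite andbF.
Qed.

Lemma card_natmem N (A : {set 'I_N}) : #|A| = nbefore (natmem A) N.
Proof. by rewrite -card_nbefore //; apply: eq_card => x; rewrite !inE ltn_ord andbT. Qed.

(** * Six-vertex statistics *)

Definition vtype_of (r c : int) : option vtype :=
  if (r == 0) && (c == 0) then Some ne
  else if (r == 1) && (c == 0) then Some nw
  else if (r == 0) && (c == 1) then Some se
  else if (r == 1) && (c == 1) then Some sw
  else None.

Definition is_vtype (s' : vtype) (o : option vtype) : bool :=
  if o is Some t then vtype_eqb t s' else false.

Definition row_psum (f : nat -> nat -> int) i m : int := \sum_(0 <= a < m) f i a.
Definition col_psum (f : nat -> nat -> int) j m : int := \sum_(0 <= a < m) f a j.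

Definition type_cell s' (f : nat -> nat -> int) i j : nat :=
  (f i j == 0) && is_vtype s' (vtype_of (row_psum f i j) (col_psum f j i)).

Definition count_type_nat s' n (f : nat -> nat -> int) : nat :=
  (\sum_(0 <= i < n) \sum_(0 <= j < n) type_cell s' f i j)%N.

Lemma sum_ord_ltn (F : nat -> int) n j : (j <= n)%N ->
  \sum_(k < n | (k < j)%N) F k = \sum_(0 <= a < j) F a.
Proof.
move=> le_jn; rewrite -(big_mkord (fun a => (a < j)%N)) (big_cat_nat (leq0n j) le_jn) /=.
rewrite [X in _ + X]big1_seq ?addr0 => [|a /andP[lt_aj]]; last first.
  by rewrite mem_index_iota leqNgt lt_aj.
by rewrite big_nat_cond [RHS]big_nat_cond; apply: eq_bigl => a; rewrite andbT andbb.
Qed.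

Lemma count_type_natE s' n (d : 'M[int]_n) : count_type s' d = count_type_nat s' n (mx_nat d).
Proof.
rewrite /count_type -sum1_card big_mkcond /=.
transitivity (\sum_(i : 'I_n) \sum_(j : 'I_n)
   ((d i j == 0) && is_vtype s' (vtype_at d i j) : nat))%N.
  rewrite pair_big; apply: eq_bigr => -[i j] _; rewrite inE /=.
  by case: (d i j == 0) => //; case: vtype_at.
rewrite /count_type_nat big_mkord; apply: eq_bigr => i _.
rewrite big_mkord; apply: eq_bigr => j _; rewrite /type_cell mx_natE /row_psum /col_psum.
rewrite -(sum_ord_ltn _ (ltnW (ltn_ord j))) -(sum_ord_ltn _ (ltnW (ltn_ord i))).
by congr (_ && is_vtype _ (vtype_of _ _)); apply: eq_bigr => k _; rewrite mx_natE.
Qed.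

Lemma eq_count_type_nat s' n f g :
  (forall i j, (i < n)%N -> (j < n)%N -> f i j = g i j) ->
  count_type_nat s' n f = count_type_nat s' n g.
Proof.
move=> fg; apply: eq_big_nat => i /andP[_ lt_i]; apply: eq_big_nat => j /andP[_ lt_j].
rewrite /type_cell /row_psum /col_psum fg //.
rewrite (@eq_big_nat _ _ _ 0 j (fun a => f i a) (fun a => g i a)) => [|a /andP[_ lt_a]]; last first.
  by rewrite fg // (ltn_trans lt_a).
rewrite (@eq_big_nat _ _ _ 0 i (fun a => f a j) (fun a => g a j)) // => a /andP[_ lt_a].
by rewrite fg // (ltn_trans lt_a).
Qed.

Definition top_type_count s' n m : nat := match s' with ne => n - m | nw => m | _ => 0 end.
Definition bottom_type_count s' n m : nat := match s' with se => n - m | sw => m | _ => 0 end.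

Lemma is_vtype_top s' r :
  is_vtype s' (vtype_of r 0) = match s' with ne => r == 0 | nw => r == 1 | _ => false end.
Proof.
rewrite /vtype_of eqxx !andbT /=.
by have [->|_] := eqVneq r 0; [|case: (r == 1)]; case: s'.
Qed.

Lemma is_vtype_bottom s' r :
  is_vtype s' (vtype_of r 1) = match s' with se => r == 0 | sw => r == 1 | _ => false end.
Proof.
rewrite /vtype_of !andbF /= !andbT.
by have [->|_] := eqVneq r 0; [|case: (r == 1)]; case: s'.
Qed.

Section AsmCounts.
Variables (n : nat) (d : 'M[int]_n).
Hypothesis asm_d : is_asm d.
Local Notation f := (mx_nat d).

Lemma asm_row_psum i m : (i < n)%N -> (m <= n)%N ->
  (row_psum f i m == 0) || (row_psum f i m == 1).
Proof. by move=> lt_i; apply/prefix_sum_alt/asm_row_alt. Qed.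

Lemma asm_col_psum_total j : (j < n)%N -> col_psum f j n = 1.
Proof. by move=> lt_j; apply/sum_alt/asm_col_alt. Qed.

Lemma count_row_psum1 m : (m <= n)%N -> (\sum_(0 <= i < n) (row_psum f i m == 1))%N = m.
Proof.
move=> le_m; apply/eqP; rewrite -(eqr_nat int) natr_sum.
rewrite (@eq_big_nat _ _ _ 0 n _ (fun i => row_psum f i m)) => [|i /andP[_ lt_i]]; last first.
  by case/orP: (asm_row_psum lt_i le_m) => /eqP ->.
rewrite /row_psum exchange_big /= (@eq_big_nat _ _ _ 0 m _ (fun _ => 1)).
  by rewrite sumr_const_nat subn0.
by move=> a /andP[_ lt_a]; apply: asm_col_psum_total (leq_trans lt_a le_m).
Qed.

Lemma count_row_psum0 m : (m <= n)%N ->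
  (\sum_(0 <= i < n) (row_psum f i m == 0))%N = (n - m)%N.
Proof.
move=> le_m; have := count_row_psum1 le_m.
have : (\sum_(0 <= i < n) ((row_psum f i m == 0) + (row_psum f i m == 1)))%N = n.
  rewrite (@eq_big_nat _ _ _ 0 n _ (fun _ => 1%N)) => [|i /andP[_ lt_i]].
    by rewrite sum_nat_const_nat muln1 subn0.
  by case/orP: (asm_row_psum lt_i le_m) => /eqP ->.
by rewrite big_split /=; lia.
Qed.

Lemma sum_vtype_top s' m : (m <= n)%N ->
  (\sum_(0 <= i < n) is_vtype s' (vtype_of (row_psum f i m) 0))%N = top_type_count s' n m.
Proof.
move=> le_m; under eq_bigr do rewrite is_vtype_top.
by case: s' => /=; rewrite ?count_row_psum0 ?count_row_psum1 ?big1.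
Qed.

Lemma sum_vtype_bottom s' m : (m <= n)%N ->
  (\sum_(0 <= i < n) is_vtype s' (vtype_of (row_psum f i m) 1))%N = bottom_type_count s' n m.
Proof.
move=> le_m; under eq_bigr do rewrite is_vtype_bottom.
by case: s' => /=; rewrite ?count_row_psum0 ?count_row_psum1 ?big1.
Qed.

End AsmCounts.

(** * The shuffle of two ASMs *)

Section ShuffleAsm.
Variables (n1 n2 : nat) (S : {set 'I_(n1 + n2)}) (d1 : 'M[int]_n1) (d2 : 'M[int]_n2).
Local Notation w := (natmem S).

Definition shuffle_fun (i j : nat) : int :=
  if (i < n1)%N then spread w (mx_nat d1 i) j
  else spread (predC w) (mx_nat d2 (i - n1)) j.

Definition shuffle_asm : 'M[int]_(n1 + n2) := \matrix_(i, j) shuffle_fun i j.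

Lemma mx_nat_shuffle i j : (i < n1 + n2)%N -> (j < n1 + n2)%N ->
  mx_nat shuffle_asm i j = shuffle_fun i j.
Proof. by move=> lt_i lt_j; rewrite /mx_nat !insubT /= mxE. Qed.

Lemma nbefore_predC_card j : (j <= n1 + n2)%N ->
  nbefore (predC w) j = #|[set x in ~: S | (x < j)%N]|.
Proof.
move=> le_j; rewrite card_nbefore //; apply: eq_nbefore le_j => a lt_a.
by rewrite natmemC.
Qed.

Lemma supp_shuffle_asm : supp shuffle_asm = shuffle S (supp d1) (supp d2).
Proof.
apply/matrixP => i j; rewrite !mxE /shuffle_fun /spread.
have le_j := ltnW (ltn_ord j).
case: splitP => [i1|i2] ->; rewrite ?ltn_ord ?(ltnNge (n1 + i2)) ?leq_addr ?addKn /= natmemE.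
  rewrite -(card_nbefore _ le_j) /mx_nat valK.
  by case: (j \in S) => //=; case: insub => // k; rewrite mxE.
rewrite (nbefore_predC_card le_j) /mx_nat valK.
by case: (j \in S) => //=; case: insub => // k; rewrite mxE.
Qed.

Hypotheses (card_S : #|S| = n1) (asm1 : is_asm d1) (asm2 : is_asm d2).

Lemma nbefore_shuffle : nbefore w (n1 + n2) = n1.
Proof. by rewrite -card_natmem card_S. Qed.

Lemma nbefore_shuffleC : nbefore (predC w) (n1 + n2) = n2.
Proof. by have := nbefore_predC w (n1 + n2); rewrite nbefore_shuffle => /addnI. Qed.

Lemma shuffle_col_top j : w j ->
  (fun i => shuffle_fun i j) =1 spread (fun a => (a < n1)%N) (mx_nat d1 ^~ (nbefore w j)).
Proof.
move=> wj i; rewrite /shuffle_fun /spread /= wj nbefore_ltn.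
by case: ltnP => // lt_i; rewrite (minn_idPl (ltnW lt_i)).
Qed.

Lemma shuffle_col_bottom j : ~~ w j ->
  (fun i => shuffle_fun i j) =1 spread (fun a => (n1 <= a)%N) (mx_nat d2 ^~ (nbefore (predC w) j)).
Proof. by move=> wj i; rewrite /shuffle_fun /spread /= (negbTE wj) nbefore_geq; case: leqP. Qed.

Lemma is_asm_shuffle : is_asm shuffle_asm.
Proof.
apply: is_asm_nat => [i j|i lt_i|j lt_j].
- rewrite /mx_nat; case: insubP => [a _ _|_]; last by rewrite eqxx.
  case: insubP => [b _ _|_]; last by rewrite eqxx.
  by rewrite mxE /shuffle_fun /spread; do 2![case: ifP => _]; rewrite ?eqxx ?asm_entry.
- rewrite (eq_nzseq (fun k => mx_nat_shuffle lt_i)) /shuffle_fun.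
  case: ltnP => [lt_i1|le_i1].
    by rewrite nzseq_spread nbefore_shuffle; apply: asm_row_alt.
  rewrite nzseq_spread nbefore_shuffleC; apply: asm_row_alt => //.
  by rewrite ltn_subLR.
- rewrite (eq_nzseq (fun k lt_k => mx_nat_shuffle lt_k lt_j)).
  have [wj|wj] := boolP (w j).
    rewrite (eq_nzseq (fun k _ => shuffle_col_top wj k)) nzseq_spread nbefore_ltn.
    rewrite (minn_idPr (leq_addr _ _)); apply: asm_col_alt => //.
    by move: (ltn_nbefore wj lt_j); rewrite nbefore_shuffle.
  rewrite (eq_nzseq (fun k _ => shuffle_col_bottom wj k)) nzseq_spread nbefore_geq addKn.
  apply: asm_col_alt => //.
  by move: (@ltn_nbefore (predC w) j _ wj lt_j); rewrite nbefore_shuffleC.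
Qed.

Local Notation f := shuffle_fun.
Local Notation N := (n1 + n2).

Lemma row_psum_shuffle_top i j : (i < n1)%N ->
  row_psum f i j = row_psum (mx_nat d1) i (nbefore w j).
Proof.
by move=> lt_i; rewrite /row_psum -big_nbefore; apply: eq_bigr => a _; rewrite /f lt_i.
Qed.

Lemma col_psum_shuffle_top i j : (i < n1)%N ->
  col_psum f j i = if w j then col_psum (mx_nat d1) (nbefore w j) i else 0.
Proof.
move=> lt_i; rewrite /col_psum.
rewrite (@eq_big_nat _ _ _ 0 i _ (fun a => if w j then mx_nat d1 a (nbefore w j) else 0)).
  by case: (w j) => //; rewrite big1.
by move=> a /andP[_ lt_a]; rewrite /f /spread (ltn_trans lt_a lt_i).
Qed.

Lemma type_cell_shuffle_top s' i j : (i < n1)%N ->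
  type_cell s' f i j = ((if w j then type_cell s' (mx_nat d1) i (nbefore w j) else 0) +
    (if w j then 0 else is_vtype s' (vtype_of (row_psum (mx_nat d1) i (nbefore w j)) 0)))%N.
Proof.
move=> lt_i; rewrite /type_cell row_psum_shuffle_top // col_psum_shuffle_top //.
by rewrite /f lt_i /spread; case: (w j); rewrite ?addn0.
Qed.

Lemma row_psum_shuffle_bottom k j :
  row_psum f (k + n1) j = row_psum (mx_nat d2) k (nbefore (predC w) j).
Proof.
rewrite /row_psum -big_nbefore; apply: eq_bigr => a _.
by rewrite /f ltnNge leq_addl addnK.
Qed.

Lemma col_psum_shuffle_bottom k j : (j < N)%N ->
  col_psum f j (k + n1) = if w j then 1 else col_psum (mx_nat d2) (nbefore (predC w) j) k.
Proof.
move=> lt_j; rewrite /col_psum addnC (big_cat_nat (leq0n n1) (leq_addr k n1)) /=.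
rewrite -{2}[n1]add0n big_addn addKn.
have bottomE a : f (a + n1) j = if w j then 0 else mx_nat d2 a (nbefore (predC w) j).
  by rewrite /f ltnNge leq_addl addnK /spread /=; case: (w j).
under [X in _ + X]eq_bigr do rewrite bottomE.
have [wj|wj] := boolP (w j).
  rewrite [X in _ + X]big1 ?addr0 // -(asm_col_psum_total asm1 (j := nbefore w j)).
    by apply: eq_big_nat => a /andP[_ lt_a]; rewrite /f lt_a /spread wj.
  by move: (ltn_nbefore wj lt_j); rewrite nbefore_shuffle.
rewrite [X in X + _]big1_seq ?add0r // => a /andP[_]; rewrite mem_index_iota => /andP[_ lt_a].
by rewrite /f lt_a /spread (negbTE wj).
Qed.

Lemma type_cell_shuffle_bottom s' k j : (j < N)%N ->
  type_cell s' f (k + n1) j =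
    ((if w j then 0 else type_cell s' (mx_nat d2) k (nbefore (predC w) j)) +
     (if w j then is_vtype s' (vtype_of (row_psum (mx_nat d2) k (nbefore (predC w) j)) 1) : nat
      else 0))%N.
Proof.
move=> lt_j; rewrite /type_cell row_psum_shuffle_bottom col_psum_shuffle_bottom //.
by rewrite /f ltnNge leq_addl addnK /spread /=; case: (w j); rewrite ?addn0.
Qed.

Lemma sum_type_cell_top s' :
  (\sum_(0 <= i < n1) \sum_(0 <= j < N) type_cell s' f i j)%N =
  (count_type_nat s' n1 (mx_nat d1) +
   \sum_(0 <= j < N) (if w j then 0 else top_type_count s' n1 (nbefore w j)))%N.
Proof.
rewrite (@eq_big_nat _ _ _ 0 n1 _ (fun i =>
    \sum_(0 <= j < N) (if w j then type_cell s' (mx_nat d1) i (nbefore w j) else 0) +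
    \sum_(0 <= j < N) (if w j then 0 else
      is_vtype s' (vtype_of (row_psum (mx_nat d1) i (nbefore w j)) 0)))%N); last first.
  move=> i /andP[_ lt_i]; rewrite -big_split.
  by apply: eq_bigr => j _; rewrite type_cell_shuffle_top.
rewrite big_split /=; congr (_ + _)%N.
  by apply: eq_bigr => i _; rewrite big_nbefore nbefore_shuffle.
rewrite exchange_big /=; apply: eq_big_nat => j /andP[_ lt_j].
case: (w j) => /=; first by rewrite big1.
by rewrite (sum_vtype_top asm1) // -[leqRHS]nbefore_shuffle leq_nbefore // ltnW.
Qed.

Lemma sum_type_cell_bottom s' :
  (\sum_(n1 <= i < N) \sum_(0 <= j < N) type_cell s' f i j)%N =
  (count_type_nat s' n2 (mx_nat d2) +
   \sum_(0 <= j < N) (if w j then bottom_type_count s' n2 (nbefore (predC w) j) else 0))%N.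
Proof.
rewrite -{1}[n1]add0n big_addn addKn.
rewrite (@eq_big_nat _ _ _ 0 n2 _ (fun k =>
    \sum_(0 <= j < N) (if w j then 0 else type_cell s' (mx_nat d2) k (nbefore (predC w) j)) +
    \sum_(0 <= j < N) (if w j then
      is_vtype s' (vtype_of (row_psum (mx_nat d2) k (nbefore (predC w) j)) 1) : nat else 0))%N);
  last first.
  move=> k _; rewrite -big_split; apply: eq_big_nat => j /andP[_ lt_j].
  exact: type_cell_shuffle_bottom.
rewrite big_split /=; congr (_ + _)%N.
  apply: eq_bigr => k _.
  have := big_nbefore addn (predC w) (type_cell s' (mx_nat d2) k) N.
  by rewrite nbefore_shuffleC => <-; apply: eq_bigr => j _ /=; case: (w j).
rewrite exchange_big /=; apply: eq_big_nat => j /andP[_ lt_j].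
case: (w j) => /=; last by rewrite big1.
by rewrite (sum_vtype_bottom asm2) // -[leqRHS]nbefore_shuffleC leq_nbefore // ltnW.
Qed.

Lemma count_type_shuffle s' :
  count_type s' shuffle_asm = (count_type s' d1 + count_type s' d2 +
    (\sum_(0 <= j < N) (if w j then 0 else top_type_count s' n1 (nbefore w j)) +
     \sum_(0 <= j < N) (if w j then bottom_type_count s' n2 (nbefore (predC w) j) else 0)))%N.
Proof.
rewrite !count_type_natE (eq_count_type_nat _ mx_nat_shuffle) /count_type_nat.
rewrite (big_cat_nat (leq0n n1) (leq_addr n2 n1)) /=.
by rewrite sum_type_cell_top sum_type_cell_bottom /count_type_nat addnACA.
Qed.

End ShuffleAsm.

(** * q-binomial coefficients and inversions *)

(* Stated over an arbitrary field so that [field] only sees variables, not the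
   q-factorials of [{fraction {poly K}}]. *)
Lemma pascal_fraction (F : fieldType) (f a b u v x : F) :
  a != 0 -> b != 0 -> u != 0 -> v != 0 ->
  f * (v + x * u) / (a * u * (b * v)) = f / (a * u * b) + x * (f / (a * (b * v))).
Proof. by move=> *; field; apply/and4P. Qed.

Section QNumbers.
Variable K : fieldType.
Local Notation q := (qvar K).

Lemma qint_neq0 n : qint K n.+1 != 0.
Proof.
have -> : qint K n.+1 = tofrac (\sum_(i < n.+1) ('X : {poly K}) ^+ i).
  by rewrite rmorph_sum; apply: eq_bigr => i _; rewrite rmorphXn.
rewrite tofrac_eq0; apply/eqP => /(congr1 (horner^~ 0)).
rewrite horner0 horner_sum big_ord_recl hornerXn expr0 big1 ?addr0 => [|i _].
  by apply/eqP; rewrite oner_eq0.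
by rewrite hornerXn expr0n.
Qed.

Lemma qfact0 : qfact K 0 = 1.
Proof. rewrite /qfact big_ord0; reflexivity. Qed.

Lemma qfactS n : qfact K n.+1 = qfact K n * qint K n.+1.
Proof. rewrite /qfact big_ord_recr; reflexivity. Qed.

Lemma qfact_neq0 n : qfact K n != 0.
Proof.
elim: n => [|n IH]; first by rewrite qfact0; apply: oner_neq0.
by rewrite qfactS mulf_neq0 ?qint_neq0.
Qed.

Lemma qintD a b : qint K (a + b) = qint K a + q ^+ a * qint K b.
Proof.
rewrite /qint big_split_ord /= mulr_sumr; congr (_ + _).
by apply: eq_bigr => i _; rewrite exprD.
Qed.

Definition qbinom N k : {fraction {poly K}} :=
  if (k <= N)%N then qfact K N / (qfact K k * qfact K (N - k)) else 0.

Lemma qbinom0 N : qbinom N 0 = 1.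
Proof. by rewrite /qbinom qfact0 subn0 mul1r divff ?qfact_neq0. Qed.

Lemma qbinom_id N : qbinom N N = 1.
Proof. by rewrite /qbinom leqnn subnn qfact0 mulr1 divff ?qfact_neq0. Qed.

Lemma qbinom_small N k : (N < k)%N -> qbinom N k = 0.
Proof. by rewrite /qbinom ltnNge => /negbTE ->. Qed.

Lemma qbinom_sym N k : (k <= N)%N -> qbinom N (N - k) = qbinom N k.
Proof. by move=> le_k; rewrite /qbinom leq_subr le_k subKn // (mulrC (qfact K k)). Qed.

Lemma qbinomSS N k :
  qbinom N.+1 k.+1 = qbinom N k.+1 + q ^+ (N - k) * qbinom N k.
Proof.
case: (ltngtP k N) => [lt_kN|lt_Nk|<-]; first last.
- by rewrite subnn mul1r !qbinom_id qbinom_small ?add0r.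
- by rewrite !qbinom_small ?mulr0 ?addr0 // ltnW.
have [m ->] : exists m, N = (k + m.+1)%N by exists (N - k.+1)%N; lia.
have [le1 le2 le3] : [/\ k.+1 <= (k + m.+1).+1, k.+1 <= k + m.+1 & k <= k + m.+1]%N.
  by split; lia.
rewrite /qbinom le1 le2 le3 !subSS (_ : k + m.+1 - k = m.+1)%N; last by lia.
rewrite (_ : k + m.+1 - k.+1 = m)%N; last by lia.
rewrite qfactS (qfactS k) (qfactS m) (_ : (k + m.+1).+1 = m.+1 + k.+1)%N; last by lia.
by rewrite qintD pascal_fraction ?qfact_neq0 ?qint_neq0.
Qed.

End QNumbers.

Definition inversions (w : pred nat) (J : nat) : nat :=
  (\sum_(0 <= j < J) (if w j then nbefore (predC w) j else 0))%N.

Lemma eq_inversions (w w' : pred nat) J : (forall a, (a < J)%N -> w a = w' a) ->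
  inversions w J = inversions w' J.
Proof.
move=> ww'; apply: eq_big_nat => j /andP[_ lt_j]; rewrite ww' //.
by congr (if _ then _ else _); apply: eq_nbefore (ltnW lt_j) => a lt_a /=; rewrite ww'.
Qed.

Lemma nbefore_sum (w : pred nat) J : nbefore w J = (\sum_(0 <= j < J) w j)%N.
Proof. by elim: J => [|J IH]; [rewrite big_geq | rewrite nbeforeS big_nat_recr //= IH]. Qed.

Lemma inversionsE (w : pred nat) J :
  (\sum_(0 <= j < J) (if w j then 0 else nbefore w J - nbefore w j))%N = inversions w J.
Proof.
elim: J => [|J IH]; first by rewrite /inversions !big_geq.
rewrite /inversions !big_nat_recr //= -/(inversions w J) nbeforeS.
case: (w J) => /=; last by rewrite !addn0 subnn addn0.
rewrite addn0 -IH (nbefore_sum (predC w)) -big_split /=.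
apply: eq_big_nat => j /andP[_ lt_j]; case: (w j) => //=.
by have := leq_nbefore w (ltnW lt_j); lia.
Qed.

Definition inversion_word s' (w : pred nat) : pred nat :=
  match s' with ne | sw => w | nw | se => predC w end.

Lemma type_counts_inversions s' (w : pred nat) J n1 n2 :
  nbefore w J = n1 -> nbefore (predC w) J = n2 ->
  (\sum_(0 <= j < J) (if w j then 0 else top_type_count s' n1 (nbefore w j)) +
   \sum_(0 <= j < J) (if w j then bottom_type_count s' n2 (nbefore (predC w) j) else 0))%N
  = inversions (inversion_word s' w) J.
Proof.
move=> <- <-; case: s' => /=.
- by rewrite [X in (_ + X)%N]big1 ?addn0 ?inversionsE // => j _; case: ifP.
- rewrite [X in (_ + X)%N]big1 ?addn0 => [|j _]; last by case: ifP.
  apply: eq_bigr => j _ /=; case: (w j) => //=.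
  by rewrite /nbefore; apply: eq_count => a; rewrite /= negbK.
- rewrite [X in (X + _)%N]big1 ?add0n => [|j _]; last by case: ifP.
  by rewrite -inversionsE; apply: eq_bigr => j _ /=; case: (w j).
- by rewrite [X in (X + _)%N]big1 ?add0n => [|j _]; last by case: ifP.
Qed.

Section SetSnoc.
Variable N : nat.

Definition set_snoc (p : bool * {set 'I_N}) : {set 'I_N.+1} :=
  [set x : 'I_N.+1 | if (x < N)%N then natmem p.2 x else p.1].

Lemma natmem_snoc b T j : (j < N)%N -> natmem (set_snoc (b, T)) j = natmem T j.
Proof. by move=> lt_j; rewrite (natmemS _ (leq_trans lt_j (leqnSn N))) inE /= lt_j. Qed.

Lemma natmem_snoc_last b T : natmem (set_snoc (b, T)) N = b.
Proof. by rewrite (natmemS _ (ltnSn N)) inE /= ltnn. Qed.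

Lemma set_snoc_bij : bijective set_snoc.
Proof.
exists (fun S => (natmem S N, [set y : 'I_N | natmem S y])).
  move=> [b T] /=; rewrite natmem_snoc_last; congr pair; apply/setP => y.
  by rewrite inE natmem_snoc ?ltn_ord // natmemE.
move=> S; apply/setP => x; rewrite inE /=; case: ltnP => [lt_x|ge_x].
  by rewrite (natmemS _ lt_x) inE /= natmemE.
have xN : nat_of_ord x = N by apply/eqP; rewrite eqn_leq ge_x -ltnS ltn_ord.
by rewrite -natmemE xN.
Qed.

Lemma card_set_snoc b T : #|set_snoc (b, T)| = (#|T| + b)%N.
Proof.
rewrite !card_natmem nbeforeS natmem_snoc_last; congr (_ + _)%N.
by apply: eq_nbefore (leqnn N) => a; apply: natmem_snoc.
Qed.

Lemma inversions_snoc b T :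
  inversions (natmem (set_snoc (b, T))) N.+1 =
  (inversions (natmem T) N + (if b then N - #|T| else 0))%N.
Proof.
have snocC j : (j <= N)%N ->
    nbefore (predC (natmem (set_snoc (b, T)))) j = nbefore (predC (natmem T)) j.
  by move=> le_j; apply: eq_nbefore le_j => a lt_a /=; rewrite natmem_snoc.
rewrite /inversions big_nat_recr //= natmem_snoc_last snocC //; congr (_ + _)%N.
  apply: eq_big_nat => j /andP[_ lt_j].
  by rewrite natmem_snoc // snocC // ltnW.
by case: b {snocC} => //; rewrite card_natmem; have := nbefore_predC (natmem T) N; lia.
Qed.

End SetSnoc.

Section InversionGeneratingFunction.
Variable K : fieldType.
Local Notation q := (qvar K).

Lemma sum_q_inversions0 N :
  \sum_(S : {set 'I_N} | #|S| == 0) q ^+ inversions (natmem S) N = 1.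
Proof.
rewrite (big_pred1 set0) => [|S]; last by rewrite /= cards_eq0.
rewrite /inversions big1_seq ?expr0 // => j _.
by rewrite /natmem; case: insub => // x; rewrite inE.
Qed.

Lemma sum_q_inversions N k :
  \sum_(S : {set 'I_N} | #|S| == k) q ^+ inversions (natmem S) N = qbinom K N k.
Proof.
elim: N k => [|N IH] [|k]; rewrite ?sum_q_inversions0 ?qbinom0 //.
  rewrite big_pred0 ?qbinom_small // => S.
  by have := max_card (mem S); rewrite card_ord; case: #|S|.
have sum_snoc (G : {set 'I_N.+1} -> {fraction {poly K}}) :
    \sum_S G S = \sum_T G (set_snoc (true, T)) + \sum_T G (set_snoc (false, T)).
  rewrite (reindex _ (onW_bij _ (set_snoc_bij N))).
  rewrite -(big_bool _ (fun b => \sum_T G (set_snoc (b, T)))) pair_bigA.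
  by apply: eq_bigr => -[].
rewrite big_mkcond sum_snoc qbinomSS addrC -!IH mulr_sumr [in RHS]big_mkcond.
congr (_ + _); last rewrite [RHS]big_mkcond; apply: eq_bigr => T _.
  by rewrite card_set_snoc inversions_snoc !addn0.
rewrite card_set_snoc inversions_snoc addn1 eqSS.
by case: eqP => [->|_]; rewrite ?mulr0 // exprD mulrC.
Qed.

Lemma sum_q_inversionsC N k : (k <= N)%N ->
  \sum_(S : {set 'I_N} | #|S| == k) q ^+ inversions (predC (natmem S)) N = qbinom K N k.
Proof.
move=> le_k; rewrite (reindex_inj (@setC_inj _)) /=.
rewrite (eq_bigl (fun S : {set 'I_N} => #|S| == N - k)%N) => [|S]; last first.
  move: (cardsC S) (max_card (mem S)); rewrite !card_ord /= => cardSC le_S.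
  by apply/eqP/eqP; lia.
rewrite -qbinom_sym // -sum_q_inversions; apply: eq_bigr => S _.
by congr (_ ^+ _); apply: eq_inversions => a lt_a; rewrite /= natmemC // negbK.
Qed.

Lemma sum_q_inversion_word s' n1 n2 :
  \sum_(S : {set 'I_(n1 + n2)} | #|S| == n1)
     q ^+ inversions (inversion_word s' (natmem S)) (n1 + n2) = qbinom K (n1 + n2) n1.
Proof.
by case: s' => /=; rewrite ?sum_q_inversions ?sum_q_inversionsC ?leq_addr.
Qed.

End InversionGeneratingFunction.

Lemma sum_phiASM_shuffle K s' n1 n2 (d1 : 'M[int]_n1) (d2 : 'M[int]_n2) :
  is_asm d1 -> is_asm d2 ->
  \sum_(S : {set 'I_(n1 + n2)} | #|S| == n1) phiASM K s' (shuffle_asm S d1 d2)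
  = phiASM K s' d1 * phiASM K s' d2.
Proof.
move=> asm1 asm2.
have summandE (S : {set 'I_(n1 + n2)}) : #|S| == n1 -> phiASM K s' (shuffle_asm S d1 d2) =
    qvar K ^+ (count_type s' d1 + count_type s' d2) / qfact K (n1 + n2) *
    qvar K ^+ inversions (inversion_word s' (natmem S)) (n1 + n2).
  move=> /eqP card_S; rewrite /phiASM (count_type_shuffle card_S asm1 asm2).
  rewrite (type_counts_inversions _ (nbefore_shuffle card_S) (nbefore_shuffleC card_S)).
  by rewrite exprD mulrAC.
rewrite (eq_bigr _ summandE) -mulr_sumr sum_q_inversion_word /qbinom leq_addr addKn.
rewrite /phiASM exprD.
by rewrite mulrA divfK ?qfact_neq0 // invfM mulrACA.
Qed.

Theorem proposition4p4 (K : fieldType) (hK : [pchar K] =i pred0) (s' : vtype) :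
  phiPM K s' (const_mx false : 'M[bool]_0) = 1 /\
  (forall (n1 n2 : nat) (d1 : 'M[int]_n1) (d2 : 'M[int]_n2),
     is_asm d1 -> is_asm d2 ->
     \sum_(S : {set 'I_(n1 + n2)} | #|S| == n1)
        phiPM K s' (shuffle S (supp d1) (supp d2))
     = phiPM K s' (supp d1) * phiPM K s' (supp d2)).
Proof.
split=> [|n1 n2 d1 d2 asm1 asm2].
  have asm0 : is_asm (const_mx 0 : 'M[int]_0) by apply/and3P; split; apply/forallP => -[].
  have -> : const_mx false = supp (const_mx 0 : 'M[int]_0) by apply/matrixP => -[].
  by rewrite phiPM_supp // /phiASM count_type_natE /count_type_nat big_geq // expr0 qfact0 divr1.
rewrite !phiPM_supp // -sum_phiASM_shuffle //; apply: eq_bigr => S /eqP card_S.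
by rewrite -supp_shuffle_asm phiPM_supp // is_asm_shuffle.
Qed.
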